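(* For every integer $n\geq 1$, $$c_n(231,1432 : 231)=c_n(312,3214 : 312)=L_{n+1}-\left\lceil \tfrac{n}{2}\right\rceil-1,$$ where $L_m$ is the $m$-th Lucas number ($L_0=2$, $L_1=1$, $L_m=L_{m-1}+L_{m-2}$ for $m\ge 2$).
   Context: $S_n$ is the symmetric group on $[n]=\{1,\dots,n\}$, and a permutation $\pi\in S_n$ is written in one-line notation $\pi=\pi_1\pi_2\cdots\pi_n$ with $\pi_i=\pi(i)$. For $\tau\in S_k$, $k\le n$, $\pi$ contains $\tau$ if there are indices $i_1<\dots<i_k$ with $\pi_{i_s}>\pi_{i_t}$ iff $\tau_s>\tau_t$ for all $1\le s<t\le k$; otherwise $\pi$ avoids $\tau$. $\pi^2$ denotes the composition $\pi\circ\pi$. For patterns $\sigma_1,\sigma_2,\rho$, $c_n(\sigma_1,\sigma_2 : \rho)$ denotes the number of permutations $\pi\in S_n$ such that $\pi$ avoids both $\sigma_1$ and $\sigma_2$ and $\pi^2$ avoids $\rho$. *)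

From mathcomp Require Import all_boot all_order all_fingroup.
Set Implicit Arguments. Unset Strict Implicit. Unset Printing Implicit Defensive.

(* A permutation pi of S_n acts on 'I_n = {0,...,n-1}, standing for [n]
   shifted down by one; pi_i is (pi i). *)
Definition contains (n : nat) (pi : 'S_n) (tau : seq nat) : bool :=
  [exists f : {ffun 'I_(size tau) -> 'I_n},
     [forall s : 'I_(size tau), forall t : 'I_(size tau),
        (s < t) ==> ((f s < f t) &&
          ((pi (f s) > pi (f t)) == (nth 0 tau s > nth 0 tau t)))]].

Definition avoids (n : nat) (pi : 'S_n) (tau : seq nat) : bool :=
  ~~ contains pi tau.

Definition cn (n : nat) (sigma1 sigma2 rho : seq nat) : nat :=
  #|[set pi : 'S_n | [&& avoids pi sigma1, avoids pi sigma2
                       & avoids (pi * pi)%g rho]]|.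

Fixpoint lucas (m : nat) : nat :=
  match m with
  | 0 => 2
  | 1 => 1
  | (m'.+1 as k).+1 => lucas k + lucas m'
  end.

(* Let w be a permutation of {0, ..., N-1}, N >= 3, avoiding 231 and 1432, whose square
   avoids 231, and look at the position Q of its maximum N-1. Avoiding 231 puts every entry
   before Q below every entry after Q; if Q > 0, avoiding 1432 (with w_0 as the "1") makes the
   entries after Q increasing, and then the square contains 231 unless Q >= N-2. So either
   w = v (N-1) or w = v (N-1) (N-2) with v of the same kind on fewer letters, or w starts with
   N-1. In the last case, let d be the first position where w deviates from N-1, N-2, ...;
   the three conditions force the tail to be 0, 1, ..., N-1-d with N-1-d < d, i.e.
   w = (N-1, ..., t, 0, 1, ..., t-1) with 2t <= N. Hence a_N = a_{N-1} + a_{N-2} + floor(N/2),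
   which solves to L_{N+1} - ceil(N/2) - 1. Conjugating by the reversal is the
   reverse-complement symmetry: it maps 312 and 3214 to 231 and 1432 and commutes with squaring,
   which gives the second count. *)

From mathcomp Require Import all_boot all_order all_fingroup zify.
Set Implicit Arguments. Unset Strict Implicit. Unset Printing Implicit Defensive.

Local Notation "w `@ i" := (nth 0 w i) (at level 3, format "w `@ i").

Lemma incr_spread (f : nat -> nat) a b : (forall k, a <= k < b -> f k < f k.+1) ->
  forall i j, a <= i -> i <= j <= b -> f i + (j - i) <= f j.
Proof.
move=> incr i j ai; elim: j => [|j IH] /andP [ij jb].
  by move: ij; rewrite leqn0 => /eqP ->; rewrite addn0.
case: (ltngtP i j.+1) => [ij' | | ->]; [| lia | by rewrite subnn addn0].
by have := incr j (ltac:(lia)); have := IH (ltac:(lia)); lia.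
Qed.

(** * Permutations as sequences *)

Definition permseq n (w : seq nat) := [&& uniq w, size w == n & all (gtn n) w].

Lemma permseqP n w : uniq w -> size w = n -> (forall i, i < n -> w`@i < n) -> permseq n w.
Proof.
move=> uw sw lt; apply/and3P; split=> //; first exact/eqP.
by apply/(all_nthP 0) => i; rewrite sw; apply: lt.
Qed.

Section PermSeq.
Variables (n : nat) (w : seq nat).
Hypothesis pw : permseq n w.

Lemma permseq_size : size w = n.
Proof. by case/and3P: pw => _ /eqP. Qed.

Lemma permseq_mem x : x \in w -> x < n.
Proof. by case/and3P: pw => _ _ /allP; apply. Qed.

Lemma permseq_lt i : i < n -> w`@i < n.
Proof. by move=> lti; apply/permseq_mem/mem_nth; rewrite permseq_size. Qed.

Lemma permseq_inj i j : i < n -> j < n -> w`@i = w`@j -> i = j.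
Proof.
case/and3P: pw => uw _ _ ltin ltjn /eqP.
by rewrite nth_uniq ?permseq_size // => /eqP.
Qed.

Lemma permseq_neq i j : i < n -> j < n -> i != j -> w`@i != w`@j.
Proof. by move=> ltin ltjn; apply: contra => /eqP /permseq_inj ->. Qed.

Lemma permseq_ltgt i j : i < n -> j < n -> i != j -> (w`@i < w`@j) || (w`@j < w`@i).
Proof. by move=> ltin ltjn ij; rewrite -neq_ltn permseq_neq. Qed.

Lemma permseq_index v : v < n -> index v w < n /\ w`@(index v w) = v.
Proof.
case/and3P: pw => uw /eqP sw /allP lt ltv.
have sub : {subset w <= iota 0 n} by move=> x /lt; rewrite mem_iota.
have [_ eqw] := uniq_min_size uw sub (eq_leq (etrans (size_iota 0 n) (esym sw))).
have vw : v \in w by rewrite eqw mem_iota.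
by rewrite -sw index_mem nth_index.
Qed.

Lemma permseq_onto v : v < n -> exists2 i, i < n & w`@i = v.
Proof. by move/permseq_index => [ltin wi]; exists (index v w). Qed.

Lemma permseq_take k : k <= n -> (forall i, i < k -> w`@i < k) -> permseq k (take k w).
Proof.
move=> kn lt; apply: permseqP; first by apply: take_uniq; case/and3P: pw.
  by rewrite size_takel ?permseq_size.
by move=> i ltik; rewrite nth_take //; apply: lt.
Qed.

End PermSeq.

Lemma permseq_cat m k (v u : seq nat) : permseq m v -> perm_eq u (iota m k) ->
  permseq (m + k) (v ++ u).
Proof.
case/and3P=> uv /eqP sv /allP vm pu; have mem_u := perm_mem pu.
apply/and3P; split.
- rewrite cat_uniq uv (perm_uniq pu) iota_uniq andbT /=.
  by apply/hasPn => x; rewrite mem_u mem_iota => /andP [mx _]; apply/negP => /vm /=; lia.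
- by rewrite size_cat sv (perm_size pu) size_iota.
- rewrite all_cat; apply/andP; split; apply/allP => x.
    by move/vm => /=; lia.
  by rewrite mem_u mem_iota /=; lia.
Qed.

Lemma permseq_cat1 (m : nat) (v : seq nat) : permseq m v -> permseq m.+1 (v ++ [:: m]).
Proof. by move/permseq_cat => /(_ 1 [:: m]); rewrite addn1; apply. Qed.

Lemma permseq_cat2 (m : nat) (v : seq nat) : permseq m v -> permseq m.+2 (v ++ [:: m.+1; m]).
Proof.
move/permseq_cat => /(_ 2 [:: m.+1; m]); rewrite addn2; apply.
by rewrite (perm_catC [:: m.+1] [:: m]).
Qed.

Definition square (w : seq nat) := map (nth 0 w) w.

Lemma square_nth (w : seq nat) i : i < size w -> (square w)`@i = w`@(w`@i).
Proof. by move=> ltiw; rewrite (nth_map 0). Qed.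

Lemma size_square (w : seq nat) : size (square w) = size w.
Proof. exact: size_map. Qed.

Lemma permseq_square (n : nat) (w : seq nat) : permseq n w -> permseq n (square w).
Proof.
move=> pw; apply: permseqP; rewrite ?size_square ?(permseq_size pw) //.
- rewrite map_inj_in_uniq; first by case/and3P: pw.
  by move=> x y /(permseq_mem pw) ltx /(permseq_mem pw) lty; apply: (permseq_inj pw).
- by move=> i ltin; rewrite square_nth ?(permseq_size pw) // !(permseq_lt pw).
Qed.

(** * Pattern occurrences *)

Definition occurrence (tau w : seq nat) (f : nat -> nat) :=
  forall s t, s < t < size tau ->
    [/\ f s < f t, f t < size w & (w`@(f t) < w`@(f s)) = (tau`@t < tau`@s)].

Definition occurs (tau w : seq nat) := exists f, occurrence tau w f.

Lemma occurrence_spread tau w f : occurrence tau w f ->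
  forall i j, i <= j < size tau -> f i + (j - i) <= f j.
Proof.
move=> occ i j /andP [ij jk]; apply: (incr_spread (a := 0) (b := (size tau).-1)) => //; last lia.
by move=> k /andP [_ lt_k]; case: (occ k k.+1) => //; lia.
Qed.

Lemma occurs_size tau w : 1 < size tau -> occurs tau w -> size tau <= size w.
Proof.
move=> tau2 [f occ]; have := occurrence_spread occ (ltac:(lia) : 0 <= (size tau).-1 < size tau).
by have [_ lt_w _] := occ 0 (size tau).-1 (ltac:(lia)); lia.
Qed.

Lemma occurs_catl tau v u : occurs tau v -> occurs tau (v ++ u).
Proof.
case=> f occ; exists f => s t st; have [fst ftv e] := occ s t st.
by rewrite !nth_cat ftv (ltn_trans fst ftv) size_cat ltn_addr.
Qed.

(* The last letter of tau lies below the letter at s, which is at least size u places earlier,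
   so an occurrence cannot reach into the top block u. *)
Lemma occurs_cat_above (tau v u : seq nat) s :
  s < (size tau).-1 -> size u <= (size tau).-1 - s -> tau`@(size tau).-1 < tau`@s ->
  (forall x y : nat, x \in v -> y \in u -> x < y) -> occurs tau (v ++ u) -> occurs tau v.
Proof.
move=> lts gap descent above [f occ]; set k := (size tau).-1.
have spread := occurrence_spread occ.
have [_ lt_vu e] := occ s k (ltac:(lia)); rewrite size_cat in lt_vu.
have lt_v : f k < size v.
  have s_gap := spread s k (ltac:(lia)); have lt_sv : f s < size v by lia.
  rewrite ltnNge; apply/negP => le_vk; have ge_kv : (f k < size v) = false by lia.
  move: e; rewrite descent !nth_cat lt_sv ge_kv.
  have lt_ku : f k - size v < size u by lia.
  by have := above (v`@(f s)) (u`@(f k - size v)) (mem_nth 0 lt_sv) (mem_nth 0 lt_ku); lia.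
exists f => s' t st; have [lt_st _ e'] := occ s' t st.
have t_gap := spread t k (ltac:(lia)).
have lt_tv : f t < size v by lia.
by move: e'; rewrite !nth_cat lt_tv (ltn_trans lt_st lt_tv).
Qed.

(* The middle comparisons below are weak because [occurs] does not assume [w] injective. *)
Lemma occurs231P (w : seq nat) : occurs [:: 2; 3; 1] w <->
  exists i j k, [/\ i < j, j < k, k < size w & w`@k < w`@i <= w`@j].
Proof.
split=> [[f occ] | [i [j [k [ij jk kw /andP [ki ij']]]]]].
- have [f01 _ e01] := occ 0 1 isT; have [f02 _ e02] := occ 0 2 isT.
  have [f12 f2w e12] := occ 1 2 isT.
  by rewrite /= in e01 e02 e12; exists (f 0), (f 1), (f 2); split=> //; lia.
- exists (nth 0 [:: i; j; k]) => -[|[|[|s]]] [|[|[|t]]] //= st; split; lia.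
Qed.

Lemma occurs1432P (w : seq nat) : occurs [:: 1; 4; 3; 2] w <->
  exists i j k l, [/\ i < j < k, k < l, l < size w, w`@i <= w`@l < w`@k & w`@k < w`@j].
Proof.
split=> [[f occ] | [i [j [k [l [/andP [ij jk] kl lw /andP [il lk] kj]]]]]].
- have [f01 _ _] := occ 0 1 isT; have [f12 _ e12] := occ 1 2 isT.
  have [f23 f3w e23] := occ 2 3 isT; have [_ _ e03] := occ 0 3 isT.
  by rewrite /= in e12 e23 e03; exists (f 0), (f 1), (f 2), (f 3); split=> //; lia.
- exists (nth 0 [:: i; j; k; l]) => -[|[|[|[|s]]]] [|[|[|[|t]]]] //= st; split; lia.
Qed.

(** * The good permutations *)

Definition good w :=
  [/\ ~ occurs [:: 2; 3; 1] w, ~ occurs [:: 1; 4; 3; 2] w & ~ occurs [:: 2; 3; 1] (square w)].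

Lemma good_cat (m n : nat) (v u : seq nat) : permseq m v -> permseq n (v ++ u) ->
  size u <= 2 -> good (v ++ u) <-> good v.
Proof.
move=> pv pvu u2; have sizev := permseq_size pv.
have {}pvu : permseq (m + size u) (v ++ u) by rewrite -sizev -size_cat (permseq_size pvu).
have u_ge (y : nat) : y \in u -> m <= y.
  move=> yu; rewrite leqNgt; apply/negP => /(permseq_onto pv) [i ltim vy].
  case/and3P: pvu; rewrite cat_uniq => /and3P [_ /hasPn disj _] _ _.
  by have := disj y yu; rewrite -vy mem_nth ?sizev.
have square_cat : square (v ++ u) = square v ++ map (nth 0 (v ++ u)) u.
  rewrite /square map_cat; congr (_ ++ _); apply/eq_in_map => x /(permseq_mem pv) ltxm.
  by rewrite nth_cat sizev ltxm.
have above (w : seq nat) : permseq m w -> forall x y : nat, x \in w -> y \in u -> x < y.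
  by move=> pw x y /(permseq_mem pw) ltxm /u_ge; apply: leq_trans.
have square_above (x y : nat) : x \in square v -> y \in map (nth 0 (v ++ u)) u -> x < y.
  move=> xv /mapP [z zu ->].
  have ltz : z < m + size u by apply: (permseq_mem pvu); rewrite mem_cat zu orbT.
  apply: (above _ (permseq_square pv) _ _ xv).
  have ltzu : z - m < size u by have := u_ge z zu; lia.
  by rewrite nth_cat sizev ltnNge u_ge //= mem_nth.
rewrite /good square_cat; split=> -[g231 g1432 gsq]; split.
- by move/(occurs_catl u).
- by move/(occurs_catl u).
- by move/(occurs_catl (map (nth 0 (v ++ u)) u)).
- by move/(occurs_cat_above (s := 0)) => /(_ isT u2 isT (above _ pv)).
- by move/(occurs_cat_above (s := 1)) => /(_ isT u2 isT (above _ pv)).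
- move/(occurs_cat_above (s := 0)) => /(_ isT _ isT square_above).
  by rewrite size_map => /(_ u2).
Qed.

Definition vshape n t := mkseq (fun i => if i < n - t then n.-1 - i else i - (n - t)) n.

Lemma size_vshape n t : size (vshape n t) = n.
Proof. exact: size_mkseq. Qed.

Lemma vshape_nth n t i : i < n ->
  (vshape n t)`@i = if i < n - t then n.-1 - i else i - (n - t).
Proof. by move=> ltin; rewrite nth_mkseq. Qed.

Lemma permseq_vshape n t : 0 < t <= n -> permseq n (vshape n t).
Proof.
move=> tn; apply: permseqP; rewrite ?size_vshape //.
  apply/mkseq_uniqP => i j; rewrite !inE => ltin ltjn.
  by repeat case: ifP => ?; lia.
by move=> i ltin; rewrite vshape_nth //; case: ifP => ?; lia.
Qed.

Lemma vshape_square n t i : 0 < t -> t + t <= n -> i < n ->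
  (vshape n t)`@((vshape n t)`@i) =
  if i < t then t.-1 - i else if i < n - t then i else n.-1 - (i - (n - t)).
Proof.
move=> t0 tn ltin; rewrite (vshape_nth _ ltin).
by case: ifP => ?; rewrite vshape_nth; repeat case: ifP => ?; lia.
Qed.

Lemma good_vshape n t : 0 < t -> t + t <= n -> good (vshape n t).
Proof.
move=> t0 tn; split.
- case/occurs231P => i [j [k [ij jk]]]; rewrite size_vshape => kn.
  by rewrite !vshape_nth; try lia; repeat case: ifP => ?; lia.
- case/occurs1432P => i [j [k [l [ijk kl]]]]; rewrite size_vshape => ln.
  by rewrite !vshape_nth; try lia; repeat case: ifP => ?; lia.
- case/occurs231P => i [j [k [ij jk]]]; rewrite size_square size_vshape => kn.
  by rewrite !square_nth ?size_vshape ?vshape_square; try lia; repeat case: ifP => ?; lia.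
Qed.

Lemma last_vshape n t : 0 < t <= n -> last 0 (vshape n t) = t.-1.
Proof.
by move=> tn; rewrite -nth_last size_vshape vshape_nth; try lia; case: ifP => ?; lia.
Qed.

(* Length 2 is a base case because [:: 1; 0] is both [[::] ++ [:: 1; 0]] and [vshape 2 1]. *)
Fixpoint good_perms n : seq (seq nat) :=
  match n with
  | 0 => [:: [::]]
  | 1 => [:: [:: 0]]
  | 2 => [:: [:: 0; 1]; [:: 1; 0]]
  | ((k.+1 as k1).+1 as k2).+1 =>
      [seq v ++ [:: k2] | v <- good_perms k2] ++
      [seq v ++ [:: k2; k1] | v <- good_perms k1] ++
      [seq vshape k2.+1 t | t <- iota 1 k2.+1./2]
  end.

Lemma good_permsE n : good_perms n.+3 =
  [seq v ++ [:: n.+2] | v <- good_perms n.+2] ++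
  [seq v ++ [:: n.+2; n.+1] | v <- good_perms n.+1] ++
  [seq vshape n.+3 t | t <- iota 1 n.+3./2].
Proof. by []. Qed.

Lemma good_perms_permseq n : all (permseq n) (good_perms n).
Proof.
elim/ltn_ind: n => -[|[|[|n]]] IH //; rewrite good_permsE !all_cat.
apply/and3P; split; apply/allP => _ /mapP [x xin ->].
- exact/permseq_cat1/(allP (IH n.+2 _)).
- exact/permseq_cat2/(allP (IH n.+1 _)).
- by apply: permseq_vshape; move: xin; rewrite mem_iota; lia.
Qed.

Lemma good_perms_uniq n : uniq (good_perms n).
Proof.
elim/ltn_ind: n => -[|[|[|n]]] IH //; rewrite good_permsE.
have cat_inj (s : seq nat) : injective (fun v => v ++ s).
  move=> v1 v2 e; have /eqP := e; rewrite eqseq_cat => [/andP [/eqP] //|].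
  by apply: (@addIn (size s)); rewrite -!size_cat e.
have lastE := congr1 (last 0).
have vshape_last t : t \in iota 1 n.+3./2 -> last 0 (vshape n.+3 t) < n.+1.
  by rewrite mem_iota => tin; rewrite last_vshape; lia.
rewrite !cat_uniq !(map_inj_uniq (cat_inj _)) !IH // has_cat negb_or.
apply/and5P; split=> //; [apply/andP; split | |].
- apply/hasPn => _ /mapP [v _ ->]; apply/negP => /mapP [x _ /lastE].
  by rewrite !last_cat /=; lia.
- apply/hasPn => _ /mapP [t /vshape_last lt_last ->]; apply/negP => /mapP [x _ vx].
  by move: lt_last; rewrite vx last_cat /=; lia.
- apply/hasPn => _ /mapP [t /vshape_last lt_last ->]; apply/negP => /mapP [x _ vx].
  by move: lt_last; rewrite vx last_cat /=; lia.
- rewrite map_inj_in_uniq ?iota_uniq // => t1 t2; rewrite !mem_iota => t1in t2in /lastE.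
  by rewrite !last_vshape; lia.
Qed.

Lemma size_good_perms n : size (good_perms n.+1) + uphalf n.+1 + 1 = lucas n.+2.
Proof.
elim/ltn_ind: n => -[|[|n]] IH //.
rewrite good_permsE !size_cat !size_map size_iota.
have -> : lucas n.+4 = lucas n.+3 + lucas n.+2 by [].
by have := IH n.+1 (ltnSn _); have := IH n (leqW (ltnSn _)); lia.
Qed.

(** * Structure of the good permutations *)

Section GoodShape.
Variables (N : nat) (w : seq nat).
Hypotheses (pw : permseq N w) (gw : good w) (N_gt2 : 2 < N).

Lemma no231 i j k : i < j -> j < k -> k < N -> w`@k < w`@i -> w`@i < w`@j -> False.
Proof.
move=> ij jk kN ki ij'; case: gw => + _ _; apply; apply/occurs231P.
by exists i, j, k; rewrite (permseq_size pw); split=> //; lia.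
Qed.

Lemma no1432 i j k l : i < j -> j < k -> k < l -> l < N ->
  w`@i < w`@l -> w`@l < w`@k -> w`@k < w`@j -> False.
Proof.
move=> ij jk kl lN il lk kj; case: gw => _ + _; apply; apply/occurs1432P.
by exists i, j, k, l; rewrite (permseq_size pw); split=> //; lia.
Qed.

Lemma no231_square i j k : i < j -> j < k -> k < N ->
  w`@(w`@k) < w`@(w`@i) -> w`@(w`@i) < w`@(w`@j) -> False.
Proof.
move=> ij jk kN ki ij'; case: gw => _ _; apply; apply/occurs231P.
exists i, j, k; rewrite size_square (permseq_size pw) !square_nth ?(permseq_size pw) //; try lia.
by split=> //; lia.
Qed.

Lemma ascent_lt i j k : i < j -> j < k -> k < N -> w`@i < w`@j -> w`@i < w`@k.
Proof.
move=> ij jk kN ltij; case/orP: (permseq_ltgt pw (ltac:(lia) : i < N) kN (ltac:(lia))) => // ki.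
by case: (no231 ij jk kN ki ltij).
Qed.

Local Notation Q := (index N.-1 w).

Lemma max_index : Q < N /\ w`@Q = N.-1.
Proof. by apply: (permseq_index pw); lia. Qed.

Lemma lt_max i : i < N -> i != Q -> w`@i < N.-1.
Proof.
have [QN wQ] := max_index => iN iQ.
by have := permseq_lt pw iN; have := permseq_neq pw iN QN iQ; rewrite wQ; lia.
Qed.

Lemma before_max_lt i k : i < Q -> Q < k -> k < N -> w`@i < w`@k.
Proof.
move=> iQ Qk kN; apply: (ascent_lt iQ Qk kN); rewrite max_index.2.
by apply: lt_max; lia.
Qed.

Lemma after_inner_max_lt k l : 0 < Q -> Q < k -> k < l -> l < N -> w`@k < w`@l.
Proof.
move=> Q0 Qk kl lN; case/orP: (permseq_ltgt pw (ltac:(lia) : k < N) lN (ltac:(lia))) => // lk.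
case: (no1432 Q0 Qk kl lN _ lk); first exact: before_max_lt Q0 (ltn_trans Qk kl) lN.
by rewrite max_index.2; apply: lt_max; lia.
Qed.

Lemma inner_max_last : 0 < Q -> Q < N.-1 -> w`@N.-1 = N.-2.
Proof.
move=> Q0 QN1; have [r rN wr] := permseq_onto pw (ltac:(lia) : N.-2 < N).
case: (ltngtP r N.-1) => [rN1 | ? | rE]; [| lia | by move: wr; rewrite rE].
have lt_last : w`@r < w`@N.-1.
  case: (ltngtP r Q) => [rQ | Qr | rQ]; first exact: before_max_lt rQ QN1 (ltac:(lia)).
    exact: after_inner_max_lt Q0 Qr rN1 (ltac:(lia)).
  by move: wr; rewrite rQ max_index.2; lia.
by have := lt_max (ltac:(lia) : N.-1 < N) (ltac:(lia) : N.-1 != Q); rewrite wr in lt_last; lia.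
Qed.

Lemma max_not_inner : 0 < Q -> Q < N.-2 -> False.
Proof.
move=> Q0 QN2; have [QN wQ] := max_index; have wl := inner_max_last Q0 (ltac:(lia) : Q < N.-1).
have [s sN ws] := permseq_onto pw QN.
case: (ltngtP s Q) => [sQ | Qs | sQ]; last by move: ws; rewrite sQ wQ; lia.
- have incr k : Q.+1 <= k < N.-1 -> w`@k < w`@k.+1.
    by case/andP=> Qk kN1; apply: after_inner_max_lt; lia.
  have above_s : Q < w`@Q.+1 by rewrite -ws; apply: before_max_lt; lia.
  by have := incr_spread incr (leqnn _) (ltac:(lia) : Q.+1 <= N.-1 <= N.-1); rewrite wl; lia.
- have sN1 : s < N.-1.
    by case: (ltngtP s N.-1) => [// | ? | sE]; [lia | move: ws; rewrite sE wl; lia].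
  have lt_penult : w`@N.-2 < N.-2.
    have := lt_max (ltac:(lia) : N.-2 < N) (ltac:(lia) : N.-2 != Q).
    by have := permseq_neq pw (ltac:(lia) : N.-2 < N) (ltac:(lia) : N.-1 < N); rewrite wl; lia.
  by apply: (no231_square Qs sN1); rewrite ?ws ?wQ ?wl; lia.
Qed.

Lemma max_last_split : Q = N.-1 -> w = take N.-1 w ++ [:: N.-1] /\ permseq N.-1 (take N.-1 w).
Proof.
have [QN wQ] := max_index => QE; have sw := permseq_size pw.
have wlast : w`@N.-1 = N.-1 by rewrite -{1}QE wQ.
split; last by apply: (permseq_take pw) => [|i iN]; [lia | apply: lt_max; lia].
rewrite -{1}(cat_take_drop N.-1 w) (drop_nth 0) ?sw; last lia.
by rewrite drop_oversize ?sw ?wlast //; lia.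
Qed.

Lemma max_penult_split : Q = N.-2 ->
  w = take N.-2 w ++ [:: N.-1; N.-2] /\ permseq N.-2 (take N.-2 w).
Proof.
have [QN wQ] := max_index => QE; have sw := permseq_size pw.
have wpen : w`@N.-2 = N.-1 by rewrite -{1}QE wQ.
have wl := inner_max_last (ltac:(lia)) (ltac:(lia)); split.
  rewrite -{1}(cat_take_drop N.-2 w) (drop_nth 0) ?sw; last lia.
  rewrite (drop_nth 0) ?sw; last lia.
  by rewrite drop_oversize ?sw (_ : N.-2.+1 = N.-1) ?wpen ?wl //; lia.
apply: (permseq_take pw) => [|i iN]; first lia.
have := lt_max (ltac:(lia) : i < N) (ltac:(lia) : i != Q).
by have := permseq_neq pw (ltac:(lia) : i < N) (ltac:(lia) : N.-1 < N); rewrite wl; lia.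
Qed.

Section TopPrefix.
Variable d : nat.
Hypotheses (d_gt0 : 0 < d) (d_ltN : d < N).
Hypotheses (prefix : forall i, i < d -> w`@i = N.-1 - i) (deviation : w`@d != N.-1 - d).

Local Notation m := (N.-1 - d).
Local Notation q := (index m w).

Lemma prefix_square i : N.-1 - i < d -> i < N -> w`@(w`@(N.-1 - i)) = w`@i.
Proof. by move=> lt_d iN; rewrite (prefix lt_d) (_ : N.-1 - (N.-1 - i) = i) //; lia. Qed.

Lemma tail_le k : d <= k -> k < N -> w`@k <= m.
Proof.
move=> dk kN; rewrite leqNgt; apply/negP => mk; have wkN := permseq_lt pw kN.
have := prefix (ltac:(lia) : N.-1 - w`@k < d).
rewrite (_ : N.-1 - (N.-1 - w`@k) = w`@k); last lia.
by move/(permseq_inj pw) => /(_ (ltac:(lia)) kN); lia.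
Qed.

Lemma m_index : d < q /\ q < N /\ w`@q = m.
Proof.
have [qN wq] := permseq_index pw (ltac:(lia) : m < N).
split=> //; case: (ltngtP d q) => // [qd | dq]; last by move: deviation; rewrite {1}dq wq eqxx.
by move: wq; rewrite prefix //; lia.
Qed.

Lemma tail_lt_m k : d <= k -> k < N -> k != q -> w`@k < m.
Proof.
have [_ [qN wq]] := m_index => dk kN kq.
by have := tail_le dk kN; have := permseq_neq pw kN qN kq; rewrite wq; lia.
Qed.

Lemma m_last : m < d -> q = N.-1.
Proof.
move=> md; have [dq [qN wq]] := m_index.
case: (ltngtP q N.-1) => [qN1 | | //]; last lia; exfalso.
have wd := tail_lt_m (leqnn d) d_ltN (ltac:(lia)).
have wl := tail_lt_m (ltac:(lia) : d <= N.-1) (ltac:(lia)) (ltac:(lia)).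
case/orP: (permseq_ltgt pw d_ltN (ltac:(lia) : N.-1 < N) (ltac:(lia))) => [dl | ld].
- apply: (no231_square (_ : N.-1 - N.-1 < N.-1 - q) (_ : N.-1 - q < N.-1 - d));
    by rewrite ?prefix_square ?wq; lia.
- by apply: (no231 dq qN1 (ltac:(lia)) ld); rewrite wq.
Qed.

Lemma tail_incr j : m < d -> d <= j -> j < N.-1 -> w`@j < w`@j.+1.
Proof.
move=> md dj jN1; have [dq [qN wq]] := m_index; have qE := m_last md.
have wj := tail_lt_m dj (ltac:(lia)) (ltac:(lia)).
case: (ltngtP j.+1 N.-1) => [jq | | jq]; last by rewrite jq -qE wq.
  case/orP: (permseq_ltgt pw (ltac:(lia) : j < N) (ltac:(lia) : j.+1 < N) (ltac:(lia))) => // jj.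
  have wj' := tail_lt_m (ltac:(lia) : d <= j.+1) (ltac:(lia)) (ltac:(lia)).
  exfalso; apply: (no231_square (ltnSn j) (_ : j.+1 < q)); try lia.
  all: rewrite ?wq 1?(@prefix (w`@j)) 1?(@prefix (w`@j.+1)) 1?(@prefix m); lia.
Qed.

Lemma tail_id j : m < d -> j <= m -> w`@(d + j) = j.
Proof.
move=> md jm; have incr k : d <= k < N.-1 -> w`@k < w`@k.+1 by case/andP; apply: tail_incr.
have := incr_spread incr (leqnn d) (ltac:(lia) : d <= d + j <= N.-1).
have := incr_spread incr (ltac:(lia) : d <= d + j) (ltac:(lia) : d + j <= N.-1 <= N.-1).
by have := tail_le (ltac:(lia) : d <= N.-1) (ltac:(lia)); lia.
Qed.

Lemma tail_before_m_lt i k : d <= i -> i < q -> q < k -> k < N -> w`@i < w`@k.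
Proof.
have [_ [_ wq]] := m_index => di iq qk kN.
by apply: (ascent_lt iq qk kN); rewrite wq; apply: tail_lt_m; lia.
Qed.

Lemma last_m_pred : d <= m -> q < N.-1 -> w`@N.-1 = m.-1.
Proof.
move=> dm qN1; have [dq [qN wq]] := m_index.
have [r rN wr] := permseq_onto pw (ltac:(lia) : m.-1 < N).
have dr : d <= r by case: (ltnP r d) => // rd; move: wr; rewrite prefix //; lia.
have wl := tail_lt_m (ltac:(lia) : d <= N.-1) (ltac:(lia)) (ltac:(lia)).
case: (ltngtP r N.-1) => [rN1 | | rE]; [exfalso | lia | by move: wr; rewrite rE].
case: (ltngtP r q) => [rq | qr | rq]; last by move: wr; rewrite rq wq; lia.
  by have := tail_before_m_lt dr rq qN1 (ltac:(lia)); rewrite wr; lia.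
have := permseq_neq pw rN (ltac:(lia) : N.-1 < N) (ltac:(lia)); rewrite wr => ne.
apply: (no1432 dq qr rN1 (ltac:(lia))); rewrite ?wr ?wq; try lia.
exact: tail_before_m_lt (leqnn d) dq qN1 (ltac:(lia)).
Qed.

Lemma m_lt_d : m < d.
Proof.
rewrite ltnNge; apply/negP => dm; have [dq [qN wq]] := m_index.
have [p pN wp] := permseq_onto pw (ltac:(lia) : 0 < N).
have dp : d <= p by case: (ltnP p d) => // pd; move: wp; rewrite prefix //; lia.
have w0 : w`@0 = N.-1 by rewrite prefix // subn0.
have wl : w`@N.-1 < N.-1.
  have := permseq_neq pw (ltac:(lia) : N.-1 < N) (ltac:(lia) : 0 < N) (ltac:(lia)).
  by rewrite w0; have := permseq_lt pw (ltac:(lia) : N.-1 < N); lia.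
(* w^2 sends 0 to w (N-1) and p to N-1, so a later position where w^2 is below w (N-1)
   completes a 231 in w^2. *)
suff [k [pk kN lt_k]] : exists k, [/\ p < k, k < N & w`@(w`@k) < w`@N.-1].
  by apply: (no231_square (_ : 0 < p) pk kN); rewrite ?w0 ?wp //; lia.
case: (ltngtP q N.-1) => [qN1 | | qE]; [| lia |]; last first.
  have wl' : w`@N.-1 = m by rewrite -{1}qE wq.
  exists N.-1; split; rewrite ?wl'; last exact: tail_lt_m dm (ltac:(lia)) (ltac:(lia)).
    by case: (ltngtP p N.-1) => [// | ? | pE]; [lia | move: wp; rewrite pE wl'; lia].
  lia.
have wl' := last_m_pred dm qN1.
have pq : p < q.
  case: (ltngtP p q) => // [qp | pq]; last by move: wp; rewrite pq wq; lia.
  by have := tail_before_m_lt (leqnn d) dq qp pN; rewrite wp.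
case: (eqVneq m q) => [mq | mq].
- exists N.-1; split; rewrite ?wl'; try lia.
  have := permseq_neq pw (ltac:(lia) : m.-1 < N) (ltac:(lia) : N.-1 < N) (ltac:(lia)).
  by have := tail_lt_m (ltac:(lia) : d <= m.-1) (ltac:(lia)) (ltac:(lia)); rewrite wl'; lia.
- exists q; split; rewrite ?wq ?wl'; try lia.
  have := permseq_neq pw (ltac:(lia) : m < N) (ltac:(lia) : N.-1 < N) (ltac:(lia)).
  by have := tail_lt_m dm (ltac:(lia)) mq; rewrite wl'; lia.
Qed.

Lemma top_prefix_vshape : w = vshape N (N - d) /\ 0 < N - d <= N./2.
Proof.
have md := m_lt_d; split; last lia.
apply: (@eq_from_nth _ 0); rewrite ?size_vshape ?(permseq_size pw) // => i iN.
rewrite vshape_nth // subKn; last lia.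
case: ifP => id; first by rewrite prefix.
by rewrite -{1}(subnKC (_ : d <= i)) ?tail_id //; lia.
Qed.

End TopPrefix.

Lemma max_first_vshape : Q = 0 -> exists2 t, 0 < t <= N./2 & w = vshape N t.
Proof.
have [QN wQ] := max_index => Q0; rewrite Q0 in wQ.
set d := find (fun i => w`@i != N.-1 - i) (iota 0 N).
have d_le : d <= N by rewrite -[leqRHS](size_iota 0 N) find_size.
have prefix i : i < d -> w`@i = N.-1 - i.
  move=> id; have /= := before_find 0 id.
  by rewrite nth_iota ?add0n; [move/negbFE/eqP | lia].
case: (ltnP d N) => [dN | Nd].
  have dev : w`@d != N.-1 - d.
    have /= := nth_find 0 (_ : has (fun i => w`@i != N.-1 - i) (iota 0 N)).
    by rewrite nth_iota //; apply; rewrite has_find size_iota.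
  have d0 : 0 < d by case: (posnP d) => // d0; move: dev; rewrite d0 wQ subn0 eqxx.
  by have [-> ?] := top_prefix_vshape d0 dN prefix dev; exists (N - d).
exists 1; first lia.
apply: (@eq_from_nth _ 0); rewrite ?size_vshape ?(permseq_size pw) // => i iN.
by rewrite vshape_nth // prefix; last lia; case: ifP; lia.
Qed.

Lemma good_shape :
  [\/ exists2 v, permseq N.-1 v & w = v ++ [:: N.-1],
      exists2 v, permseq N.-2 v & w = v ++ [:: N.-1; N.-2]
    | exists2 t, 0 < t <= N./2 & w = vshape N t].
Proof.
have [QN _] := max_index.
case: (posnP Q) => [/max_first_vshape shape | Q0]; first exact: Or33.
case: (ltngtP Q N.-2) => [QN2 | QN2 | QE]; first by case: (max_not_inner Q0 QN2).
  by have [wE pv] := max_last_split (ltac:(lia)); apply: Or31; exists (take N.-1 w).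
by have [wE pv] := max_penult_split QE; apply: Or32; exists (take N.-2 w).
Qed.

End GoodShape.

Lemma good_small w : size w <= 2 -> good w.
Proof. by move=> w2; split=> /occurs_size; rewrite ?size_square => /(_ isT) /=; lia. Qed.

Lemma good_permsP n w : permseq n w -> good w <-> w \in good_perms n.
Proof.
elim/ltn_ind: n w => -[|[|[|n]]] IH w pw.
- by rewrite (size0nil (permseq_size pw)); split=> // _; apply: good_small.
- case: w pw => [|x [|y w]] pw; move: (permseq_size pw) => // _.
  have := permseq_lt pw (ltnSn 0) => /= x0.
  by rewrite (_ : x = 0); [split=> // _; apply: good_small | lia].
- case: w pw => [|x [|y [|z w]]] pw; move: (permseq_size pw) => // _; rewrite inE.
  have := permseq_neq pw (ltn0Sn 1) (ltnSn 1) isT.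
  have := permseq_lt pw (ltn0Sn 1); have := permseq_lt pw (ltnSn 1) => /= y2 x2 xy.
  split=> _; last exact: good_small.
  by have [[-> ->] | [-> ->]] : (x = 0 /\ y = 1) \/ (x = 1 /\ y = 0) by lia.
split.
- move=> gw; rewrite good_permsE !mem_cat.
  case: (good_shape pw gw isT) => [[v pv wE] | [v pv wE] | [t tN ->]]; rewrite ?wE in pw gw *.
  + by apply/orP; left; apply/map_f/(IH _ _ _ pv) => //; apply/(good_cat pv pw).
  + by apply/or3P; apply: Or32; apply/map_f/(IH _ _ _ pv) => //; apply/(good_cat pv pw).
  + by apply/or3P; apply: Or33; apply/map_f; rewrite mem_iota; lia.
rewrite good_permsE !mem_cat => /or3P [] /mapP [x xin ->].
- have pv := allP (good_perms_permseq _) _ xin.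
  by apply/(good_cat pv (permseq_cat1 pv)) => //; apply/(IH _ _ _ pv).
- have pv := allP (good_perms_permseq _) _ xin.
  by apply/(good_cat pv (permseq_cat2 pv)) => //; apply/(IH _ _ _ pv).
- by apply: good_vshape; move: xin; rewrite mem_iota; lia.
Qed.

(** * Counting *)

Definition pseq n (pi : 'S_n) : seq nat := [seq val (pi i) | i <- enum 'I_n].

Section PermAsSeq.
Variable n : nat.

Lemma size_pseq (pi : 'S_n) : size (pseq pi) = n.
Proof. by rewrite size_map size_enum_ord. Qed.

Lemma pseq_nth (pi : 'S_n) (i : 'I_n) : (pseq pi)`@i = pi i.
Proof. by rewrite (nth_map i) ?size_enum_ord // nth_ord_enum. Qed.

Lemma permseq_pseq (pi : 'S_n) : permseq n (pseq pi).
Proof.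
apply: permseqP => [|| i ltin]; rewrite ?size_pseq //.
  by rewrite map_inj_uniq ?enum_uniq // => i j /val_inj/perm_inj.
by rewrite (pseq_nth pi (Ordinal ltin)).
Qed.

Lemma pseq_inj : injective (@pseq n).
Proof. by move=> pi rho e; apply/permP => i; apply: ord_inj; rewrite -!pseq_nth e. Qed.

Lemma pseq_onto w : permseq n w -> exists pi : 'S_n, pseq pi = w.
Proof.
move=> pw; have val_w (i : 'I_n) : val (insubd i (w`@i)) = w`@i.
  by rewrite val_insubd permseq_lt.
have w_inj : injective (fun i : 'I_n => insubd i (w`@i)).
  by move=> i j /(congr1 val); rewrite !val_w => /(permseq_inj pw (ltn_ord i) (ltn_ord j))/val_inj.
exists (perm w_inj); apply: (@eq_from_nth _ 0); rewrite size_pseq ?(permseq_size pw) // => i ltin.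
by rewrite (pseq_nth _ (Ordinal ltin)) permE val_w.
Qed.

Lemma card_pseq (L : seq (seq nat)) : uniq L -> all (permseq n) L ->
  #|[set pi : 'S_n | pseq pi \in L]| = size L.
Proof.
move=> uL pL; rewrite cardE -(size_map (@pseq n)); apply/perm_size/uniq_perm => //.
  by rewrite map_inj_uniq ?enum_uniq //; apply: pseq_inj.
move=> w; apply/mapP/idP => [[pi] | wL]; first by rewrite mem_enum inE => ? ->.
by have [pi piw] := pseq_onto (allP pL _ wL); exists pi; rewrite // mem_enum inE piw.
Qed.

Lemma pseq_mul (pi : 'S_n) : pseq (pi * pi)%g = square (pseq pi).
Proof.
apply: (@eq_from_nth _ 0); rewrite ?size_square !size_pseq // => i ltin.
by rewrite square_nth ?size_pseq // !(pseq_nth _ (Ordinal ltin)) permM pseq_nth.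
Qed.

End PermAsSeq.

Lemma containsP n (pi : 'S_n.+1) tau : reflect (occurs tau (pseq pi)) (contains pi tau).
Proof.
apply: (iffP existsP) => [[F /forallP occF] | [f occf]].
  exists (fun s => if insub s is Some o then val (F o) else 0) => s t /andP [st tk].
  have sk : s < size tau by apply: ltn_trans st tk.
  rewrite (insubT (fun i => i < size tau) sk) (insubT (fun i => i < size tau) tk) /=.
  rewrite size_pseq !pseq_nth.
  by move: occF => /(_ (Sub s sk)) /forallP /(_ (Sub t tk)) /implyP /(_ st) /andP [? /eqP ->].
exists [ffun s : 'I_(size tau) => inord (f s) : 'I_n.+1].
apply/forallP => s; apply/forallP => t; apply/implyP => st.
have [lt_st ltn e] := occf s t (ltac:(by rewrite st ltn_ord)); rewrite size_pseq in ltn.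
by rewrite !ffunE !inordK -?pseq_nth ?inordK ?e ?eqxx ?lt_st //; lia.
Qed.

Definition rev_compl m (s : seq nat) := rev (map (fun x => m - x) s).

Lemma size_rev_compl m s : size (rev_compl m s) = size s.
Proof. by rewrite size_rev size_map. Qed.

Lemma rev_compl_nth m s i : i < size s -> (rev_compl m s)`@i = m - s`@((size s).-1 - i).
Proof.
move=> lti; rewrite nth_rev ?size_map // (nth_map 0); last lia.
by rewrite (_ : size s - i.+1 = (size s).-1 - i) //; lia.
Qed.

Lemma rev_complK m s : all (fun x => x <= m) s -> rev_compl m (rev_compl m s) = s.
Proof.
move=> /allP sm; rewrite /rev_compl map_rev revK -map_comp map_id_in // => x /sm /=; lia.
Qed.

Lemma rev_compl_le m s : all (fun x => x <= m) (rev_compl m s).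
Proof. by apply/allP => x; rewrite mem_rev => /mapP [y _ ->]; rewrite leq_subr. Qed.

Lemma occurs_rev_compl M m tau w : all (fun x => x <= M) tau -> all (fun x => x <= m) w ->
  occurs tau w -> occurs (rev_compl M tau) (rev_compl m w).
Proof.
move=> /allP tauM /allP wm [f occ]; set k := size tau.
exists (fun s => (size w).-1 - f (k.-1 - s)) => s t; rewrite size_rev_compl => st.
have [ft_fs fsw e] := occ (k.-1 - t) (k.-1 - s) (ltac:(lia)).
have ftw : f (k.-1 - t) < size w by lia.
rewrite size_rev_compl !rev_compl_nth ?size_rev_compl; try lia.
have back x : x < size w -> (size w).-1 - ((size w).-1 - x) = x by lia.
rewrite !back; try lia.
have le_tau x : x < k -> tau`@x <= M by move=> ltx; apply/tauM/mem_nth.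
have le_w x : x < size w -> w`@x <= m by move=> ltx; apply/wm/mem_nth.
have := le_tau (k.-1 - s) (ltac:(lia)); have := le_tau (k.-1 - t) (ltac:(lia)).
by have := le_w _ ftw; have := le_w _ fsw; move: e; rewrite -/k; split; lia.
Qed.

Definition rev_perm n : 'S_n := perm (@rev_ord_inj n).

Lemma pseq_conj_rev n (pi : 'S_n) : pseq (pi ^ rev_perm n)%g = rev_compl n.-1 (pseq pi).
Proof.
apply: (@eq_from_nth _ 0); rewrite ?size_rev_compl !size_pseq // => i ltin.
have revV : (rev_perm n)^-1%g (Ordinal ltin) = rev_ord (Ordinal ltin).
  by apply: (canLR (permK _)); rewrite permE rev_ordK.
rewrite (pseq_nth _ (Ordinal ltin)) rev_compl_nth ?size_pseq // conjgE !permM revV permE.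
have -> : n.-1 - i = rev_ord (Ordinal ltin) by rewrite /=; lia.
by rewrite pseq_nth /=; lia.
Qed.

Lemma contains_conj_rev n (pi : 'S_n.+1) M tau : all (fun x => x <= M) tau ->
  contains (pi ^ rev_perm n.+1)%g (rev_compl M tau) = contains pi tau.
Proof.
have pseq_le (rho : 'S_n.+1) : all (fun x => x <= n) (pseq rho).
  by apply/allP => x /(permseq_mem (permseq_pseq rho)).
move=> tauM; apply/containsP/containsP; rewrite pseq_conj_rev.
  by move/(occurs_rev_compl (rev_compl_le M tau) (rev_compl_le n (pseq pi))); rewrite !rev_complK.
exact: occurs_rev_compl.
Qed.

Lemma avoidsP n (pi : 'S_n.+1) tau : reflect (~ occurs tau (pseq pi)) (avoids pi tau).
Proof. by apply: (iffP negP) => notc /containsP. Qed.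

Lemma cn_231_1432 n : cn n.+1 [:: 2; 3; 1] [:: 1; 4; 3; 2] [:: 2; 3; 1] = size (good_perms n.+1).
Proof.
rewrite /cn -(card_pseq (good_perms_uniq _) (good_perms_permseq _)).
apply: eq_card => pi; rewrite !inE.
have good_piP := good_permsP (permseq_pseq pi); rewrite /good -pseq_mul in good_piP.
apply/and3P/idP => [[a1 a2 a3] | /good_piP [g1 g2 g3]].
  by apply/good_piP; split; apply/avoidsP.
by split; apply/avoidsP.
Qed.

Lemma cn_rev n : cn n.+1 [:: 3; 1; 2] [:: 3; 2; 1; 4] [:: 3; 1; 2] =
  cn n.+1 [:: 2; 3; 1] [:: 1; 4; 3; 2] [:: 2; 3; 1].
Proof.
rewrite /cn -[RHS](card_preimset _ (conjg_inj (rev_perm n.+1))).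
apply: eq_card => pi; rewrite !inE -conjMg.
rewrite -[[:: 2; 3; 1]]/(rev_compl 4 [:: 3; 1; 2]).
rewrite -[[:: 1; 4; 3; 2]]/(rev_compl 5 [:: 3; 2; 1; 4]).
by rewrite /avoids !contains_conj_rev.
Qed.

Theorem theorem4p1 (n : nat) : 1 <= n ->
  cn n [:: 2; 3; 1] [:: 1; 4; 3; 2] [:: 2; 3; 1] = lucas n.+1 - uphalf n - 1 /\
  cn n [:: 3; 1; 2] [:: 3; 2; 1; 4] [:: 3; 1; 2] = lucas n.+1 - uphalf n - 1.
Proof.
case: n => [//|n] _; rewrite cn_rev cn_231_1432 -size_good_perms.
by split; lia.
Qed.
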